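(* For every epistemic transition system, every history $h$ of it, all coalitions $C,D$ with $C\cap D=\varnothing$ and all formulas $\phi,\psi\in\Phi$: if $h\Vdash\mathsf{H}_C(\phi\to\psi)$ and $h\Vdash\mathsf{H}_D\phi$, then $h\Vdash\mathsf{H}_{C\cup D}\psi$.
   Context: Fix a set of agents $\mathcal{A}$; a coalition is a subset of $\mathcal{A}$. Language $\Phi$: $\phi ::= p \mid \neg\phi \mid \phi\to\phi \mid \mathsf{K}_C\phi \mid \mathsf{H}_C\phi$ ($C\subseteq\mathcal{A}$). An epistemic transition system is a tuple $(W,\{\sim_a\}_{a\in\mathcal{A}},V,M,\pi)$ with $W$ a set of states, each $\sim_a$ an equivalence relation on $W$, $V$ a nonempty set, $M\subseteq W\times V^{\mathcal{A}}\times W$, $\pi$ mapping propositional variables to subsets of $W$. For profiles $\mathbf{s}_1\in V^{C_1},\mathbf{s}_2\in V^{C_2}$ and $C\subseteq C_1\cap C_2$, $\mathbf{s}_1=_C\mathbf{s}_2$ means $(\mathbf{s}_1)_a=(\mathbf{s}_2)_a$ for all $a\in C$. A history is a sequence $(w_0,\mathbf{s}_1,w_1,\dots,\mathbf{s}_n,w_n)$, $n\ge0$, with $w_i\in W$, $\mathbf{s}_i\in V^{\mathcal{A}}$, $(w_i,\mathbf{s}_{i+1},w_{i+1})\in M$; $hd(h)$ is its last element, and $h::\mathbf{s}::w$ denotes extension. $h\approx_a h'$ iff the histories have the same length $n$, their $i$-th states are $\sim_a$-related for all $i$, and their $i$-th profiles agree at $a$ for all $i$; $h\approx_C h'$ iff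 $h\approx_a h'$ for all $a\in C$. Satisfaction: $h\Vdash p$ iff $hd(h)\in\pi(p)$; Boolean clauses standard; $h\Vdash\mathsf{K}_C\phi$ iff $h'\Vdash\phi$ for all histories $h'$ with $h\approx_C h'$; $h\Vdash\mathsf{H}_C\phi$ iff there is $\mathbf{s}\in V^C$ such that for every history $h'::\mathbf{s}'::w'$ with $h\approx_C h'$ and $\mathbf{s}=_C\mathbf{s}'$, $h'::\mathbf{s}'::w'\Vdash\phi$. *)

From Stdlib Require Import List RelationClasses.
Import ListNotations.
Set Implicit Arguments.

Definition coalition (Ag : Type) := Ag -> Prop.

Inductive form (Ag PV : Type) : Type :=
| Var : PV -> form Ag PV
| Neg : form Ag PV -> form Ag PV
| Imp : form Ag PV -> form Ag PV -> form Ag PV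
| Kn  : coalition Ag -> form Ag PV -> form Ag PV
| Hw  : coalition Ag -> form Ag PV -> form Ag PV.

Record ETS (Ag PV : Type) := {
  W : Type;
  sim : Ag -> W -> W -> Prop;
  sim_equiv : forall a, Equivalence (sim a);
  V : Type;
  V_nonempty : inhabited V;
  M : W -> (Ag -> V) -> W -> Prop;
  pi : PV -> W -> Prop
}.

Section Hist.
Variables (Ag PV : Type) (E : ETS Ag PV).

(* A (candidate) history (w0, [(s1,w1); ...; (sn,wn)]). *)
Definition hist := (W E * list ((Ag -> V E) * W E))%type.

Fixpoint chain (w : W E) (l : list ((Ag -> V E) * W E)) : Prop :=
  match l with
  | [] => True
  | (s, w') :: l' => M E w s w' /\ chain w' l'
  end.

Definition is_history (h : hist) : Prop := chain (fst h) (snd h).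

Fixpoint last_state (w : W E) (l : list ((Ag -> V E) * W E)) : W E :=
  match l with
  | [] => w
  | (_, w') :: l' => last_state w' l'
  end.
Definition hd (h : hist) : W E := last_state (fst h) (snd h).

Definition ext (h : hist) (s : Ag -> V E) (w : W E) : hist :=
  (fst h, snd h ++ [(s, w)]).

Definition indist_a (a : Ag) (h h' : hist) : Prop :=
  sim E a (fst h) (fst h') /\
  Forall2 (fun p p' => fst p a = fst p' a /\ sim E a (snd p) (snd p'))
          (snd h) (snd h').

Definition indist (C : coalition Ag) (h h' : hist) : Prop :=
  forall a, C a -> indist_a a h h'.

Definition agree_on (C : coalition Ag) (s : forall a, C a -> V E)
  (s' : Ag -> V E) : Prop :=
  forall a (Ha : C a), s a Ha = s' a.

Fixpoint sat (h : hist) (f : form Ag PV) : Prop :=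
  match f with
  | Var _ p => pi E p (hd h)
  | Neg g => ~ sat h g
  | Imp g1 g2 => sat h g1 -> sat h g2
  | Kn C g => forall h', is_history h' -> indist C h h' -> sat h' g
  | Hw C g => exists s : (forall a, C a -> V E),
      forall h' s' w', is_history (ext h' s' w') ->
        indist C h h' -> agree_on C s s' -> sat (ext h' s' w') g
  end.
End Hist.

Definition cunion (Ag : Type) (C D : coalition Ag) : coalition Ag :=
  fun a => C a \/ D a.
Definition disjoint (Ag : Type) (C D : coalition Ag) : Prop :=
  forall a, C a -> D a -> False.

(* A joint strategy of C ∪ D plays the C-strategy for (φ → ψ) on C and the
   D-strategy for φ on the rest, which by disjointness is exactly D. Any
   transition consistent with the joint strategy from a history
   (C ∪ D)-indistinguishable from h is then consistent with both strategies
   from a history C- and D-indistinguishable from h, so it satisfies both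
   φ → ψ and φ, hence ψ. *)
From Stdlib Require Import ClassicalEpsilon ProofIrrelevance.

Set Implicit Arguments.
Unset Strict Implicit.

Lemma cunion_r_of_not_l (Ag : Type) (C D : coalition Ag) (a : Ag) :
  cunion C D a -> ~ C a -> D a.
Proof. intros [Hc | Hd] Hn; [contradiction | exact Hd]. Qed.

Section JointStrategy.
Variables (Ag PV : Type) (E : ETS Ag PV) (C D : coalition Ag).

Lemma indist_cunion_l (h h' : hist E) :
  indist (cunion C D) h h' -> indist C h h'.
Proof. intros Hind a Ha. apply Hind. left. exact Ha. Qed.

Lemma indist_cunion_r (h h' : hist E) :
  indist (cunion C D) h h' -> indist D h h'.
Proof. intros Hind a Ha. apply Hind. right. exact Ha. Qed.

Variables (sC : forall a, C a -> V E) (sD : forall a, D a -> V E).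

Definition join_strategy (a : Ag) (Ha : cunion C D a) : V E :=
  match excluded_middle_informative (C a) with
  | left Hc => sC Hc
  | right Hn => sD (cunion_r_of_not_l Ha Hn)
  end.

Lemma join_strategy_l a (Hc : C a) (Ha : cunion C D a) :
  join_strategy Ha = sC Hc.
Proof.
  unfold join_strategy.
  destruct (excluded_middle_informative (C a)) as [Hc' | Hn].
  - f_equal. apply proof_irrelevance.
  - contradiction.
Qed.

Lemma join_strategy_r a (Hd : D a) (Ha : cunion C D a) :
  disjoint C D -> join_strategy Ha = sD Hd.
Proof.
  intros Hdis. unfold join_strategy.
  destruct (excluded_middle_informative (C a)) as [Hc | Hn].
  - exfalso. exact (Hdis a Hc Hd).
  - f_equal. apply proof_irrelevance.
Qed.

Lemma agree_on_join_l (s : Ag -> V E) :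
  agree_on E (cunion C D) join_strategy s -> agree_on E C sC s.
Proof.
  intros Hag a Hc.
  rewrite <- (Hag a (or_introl Hc)), (join_strategy_l Hc). reflexivity.
Qed.

Lemma agree_on_join_r (s : Ag -> V E) : disjoint C D ->
  agree_on E (cunion C D) join_strategy s -> agree_on E D sD s.
Proof.
  intros Hdis Hag a Hd.
  rewrite <- (Hag a (or_intror Hd)), (join_strategy_r Hd _ Hdis). reflexivity.
Qed.

End JointStrategy.

Theorem lemma11 (Ag PV : Type) (E : ETS Ag PV) (h : hist E)
  (C D : coalition Ag) (phi psi : form Ag PV) :
  is_history h -> disjoint C D ->
  sat h (Hw C (Imp phi psi)) -> sat h (Hw D phi) ->
  sat h (Hw (cunion C D) psi).
Proof.
  intros _ Hdis [sC HC] [sD HD].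
  exists (join_strategy sC sD).
  intros h' s' w' Hext Hind Hag.
  apply (HC h' s' w' Hext (indist_cunion_l Hind) (agree_on_join_l Hag)).
  exact (HD h' s' w' Hext (indist_cunion_r Hind) (agree_on_join_r Hdis Hag)).
Qed.
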